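(* Let $N,d\ge1$, $\lambda,\tau>0$, and let $\psi:[0,\infty)\to(0,\infty)$ be positive, nonincreasing, differentiable with $\psi(r)\le1$ for all $r\ge0$. Let $(x_i,v_i)_{i=1}^N$ solve $$\dot x_i(t)=v_i(t),\qquad \dot v_i(t)=\frac{\lambda}{N}\sum_{j=1}^N\psi(|x_i(t-\tau)-x_j(t-\tau)|)\,(v_j(t-\tau)-v_i(t-\tau)),\qquad t>0,$$ with initial data $(x_i,v_i)=(x_i^0,v_i^0)$ on $[-\tau,0]$, $(x_i^0,v_i^0)\in C([-\tau,0];\mathbb{R}^{2d})\cap C^1((-\tau,0);\mathbb{R}^{2d})$. Then for any $\delta>0$, $$\frac{d}{dt}V(t)\le 2(\delta-1)\lambda\widetilde D(t)+\frac{2\tau\lambda^3}{\delta}\int_{t-\tau}^t\widetilde D(s)\,ds\qquad\text{for all } t>\tau.$$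
   Context: $V(t):=\frac12\sum_{i,j=1}^N|v_i(t)-v_j(t)|^2$, $D(t):=\frac12\sum_{i,j=1}^N\psi(|x_i(t)-x_j(t)|)\,|v_j(t)-v_i(t)|^2$, and $\widetilde D(t):=D(t-\tau)$. *)

From HB Require Import structures.
From mathcomp Require Import all_boot all_order all_algebra.
From mathcomp Require Import all_classical all_reals all_analysis.
Set Implicit Arguments. Unset Strict Implicit. Unset Printing Implicit Defensive.
Import Order.TTheory GRing.Theory Num.Theory.
Import numFieldNormedType.Exports.
Local Open Scope ring_scope.
Local Open Scope classical_set_scope.

(* Positions/velocities are given componentwise: x i k t is the k-th
   coordinate of x_i(t) in R^d. *)

Definition sqdist {R : realType} {d : nat} (a b : 'I_d -> R) : R :=
  \sum_(k < d) (a k - b k) ^+ 2.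

Definition eucl_dist {R : realType} {d : nat} (a b : 'I_d -> R) : R :=
  Num.sqrt (sqdist a b).

Definition Vfun {R : realType} {N d : nat} (v : 'I_N -> 'I_d -> R -> R) (t : R) : R :=
  2^-1 * \sum_(i < N) \sum_(j < N) sqdist (fun k => v i k t) (fun k => v j k t).

Definition Dfun {R : realType} {N d : nat} (psi : R -> R)
  (x v : 'I_N -> 'I_d -> R -> R) (t : R) : R :=
  2^-1 * \sum_(i < N) \sum_(j < N)
    psi (eucl_dist (fun k => x i k t) (fun k => x j k t)) *
    sqdist (fun k => v j k t) (fun k => v i k t).

Definition Dtilde {R : realType} {N d : nat} (psi : R -> R)
  (x v : 'I_N -> 'I_d -> R -> R) (tau t : R) : R :=
  Dfun psi x v (t - tau).

(* Differentiating V and using that the forces sum to zero gives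
   V' = 2 lambda sum_{i,j} psi_ij (u_j - u_i).v_i(t), where u = v(t - tau) and
   psi_ij is evaluated at time t - tau.  Writing v_i(t) = u_i + (v_i(t) - u_i),
   the u-part equals -2 lambda D~(t) by the symmetry of psi_ij, and Young's
   inequality bounds the rest by 2 delta lambda D~(t) plus
   (lambda N / delta) sum_i |v_i(t) - v_i(t - tau)|^2.  By Cauchy-Schwarz in
   time this increment is at most tau int_{t-tau}^t sum_i |v_i'|^2, and
   sum_i |v_i'(s)|^2 <= (2 lambda^2 / N) D~(s) because 0 < psi <= 1. *)

From HB Require Import structures.
From mathcomp Require Import all_boot all_order all_algebra.
From mathcomp Require Import all_classical all_reals all_analysis.
From mathcomp.algebra_tactics Require Import ring lra.
Import Order.TTheory GRing.Theory Num.Theory.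
Import numFieldNormedType.Exports.

Set Implicit Arguments.
Unset Strict Implicit.
Unset Printing Implicit Defensive.

Local Open Scope ring_scope.
Local Open Scope classical_set_scope.

Section finite_sums.
Variable R : realFieldType.

Lemma sum_antisym_eq0 n (a : 'I_n -> 'I_n -> R) :
  (forall i j, a i j = - a j i) -> \sum_i \sum_j a i j = 0.
Proof.
move=> a_anti.
have e : \sum_i \sum_j a i j = - \sum_i \sum_j a i j.
  rewrite [LHS]exchange_big /= -sumrN; apply: eq_bigr => j _.
  by rewrite -sumrN; apply: eq_bigr => i _.
lra.
Qed.

Lemma sqr_sum_le n (a : 'I_n -> R) : (\sum_j a j) ^+ 2 <= n%:R * \sum_j a j ^+ 2.
Proof.
set S := \sum_j a j; set Q := \sum_j a j ^+ 2.
have row i : \sum_j (a i - a j) ^+ 2 = a i ^+ 2 *+ n - 2 * a i * S + Q.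
  rewrite (eq_bigr (fun j => (a i ^+ 2 - 2 * a i * a j) + a j ^+ 2)); last first.
    by move=> j _; rewrite sqrrB; ring.
  by rewrite big_split /= sumrB sumr_const card_ord -mulr_sumr.
have total : \sum_i \sum_j (a i - a j) ^+ 2 = (n%:R * Q - S ^+ 2) *+ 2.
  rewrite (eq_bigr _ (fun i _ => row i)) big_split /= sumrB -mulr_suml -mulr_sumr.
  rewrite sumr_const card_ord sumrMnl mulr_natl -/Q -/S mulr2n; ring.
have : 0 <= \sum_i \sum_j (a i - a j) ^+ 2.
  by apply: sumr_ge0 => i _; apply: sumr_ge0 => j _; exact: sqr_ge0.
by rewrite total pmulrn_lge0 // subr_ge0.
Qed.

Lemma sum_mulBB_centered n (a b : 'I_n -> R) : \sum_i b i = 0 ->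
  \sum_i \sum_j (a i - a j) * (b i - b j) = n%:R *+ 2 * \sum_i a i * b i.
Proof.
move=> b0.
have row i : \sum_j (a i - a j) * (b i - b j) =
    n%:R * (a i * b i) - b i * \sum_j a j + \sum_j a j * b j.
  rewrite (eq_bigr (fun j => a i * b i - a i * b j - b i * a j + a j * b j)); last first.
    by move=> j _; ring.
  by rewrite big_split /= !sumrB sumr_const card_ord -!mulr_sumr b0 mulr_natl; ring.
rewrite (eq_bigr _ (fun i _ => row i)) big_split /= sumrB -!mulr_sumr -mulr_suml b0.
by rewrite sumr_const card_ord mulr_natl; ring.
Qed.

Lemma young_weighted (p a b del : R) : 0 <= p <= 1 -> 0 < del ->
  p * a * b <= del / 2 * (p * a ^+ 2) + b ^+ 2 / (2 * del).
Proof.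
move=> /andP[p0 p1] del0; rewrite -subr_ge0.
have -> : del / 2 * (p * a ^+ 2) + b ^+ 2 / (2 * del) - p * a * b =
    (p * (del * a - b) ^+ 2 + (1 - p) * b ^+ 2) / (2 * del).
  by field; exact: lt0r_neq0.
apply: divr_ge0; last by apply: mulr_ge0 => //; exact: ltW.
by apply: addr_ge0; apply: mulr_ge0; rewrite ?subr_ge0 ?sqr_ge0.
Qed.

End finite_sums.

Section alignment.
Variables (R : realFieldType) (n d : nat) (lam : R) (P : 'I_n -> 'I_n -> R).
Hypothesis n_gt0 : (0 < n)%N.
Hypothesis P_range : forall i j, 0 <= P i j <= 1.
Hypothesis P_sym : forall i j, P i j = P j i.

(* With [P i j] the weight [psi (|x_i - x_j|)] at the delayed time and [u] the
   delayed velocities, [drift] is the right-hand side of the velocity equation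
   and [dissipation] is the functional [D]. *)
Definition drift (u : 'I_n -> 'I_d -> R) i k :=
  lam / n%:R * \sum_j P i j * (u j k - u i k).

Definition dissipation (u : 'I_n -> 'I_d -> R) :=
  2^-1 * \sum_i \sum_j P i j * \sum_k (u j k - u i k) ^+ 2.

Lemma sum_drift_eq0 u k : \sum_i drift u i k = 0.
Proof.
rewrite -mulr_sumr sum_antisym_eq0 ?mulr0 // => i j.
by rewrite P_sym -mulrN opprB.
Qed.

Lemma sum_sqr_drift_le u :
  \sum_i \sum_k drift u i k ^+ 2 <= 2 * lam ^+ 2 / n%:R * dissipation u.
Proof.
have n_pos : 0 < n%:R :> R by rewrite ltr0n.
have c_ge0 : 0 <= lam ^+ 2 / n%:R by rewrite divr_ge0 ?sqr_ge0 ?ltW.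
have drift_le i k :
    drift u i k ^+ 2 <= lam ^+ 2 / n%:R * \sum_j P i j * (u j k - u i k) ^+ 2.
  rewrite exprMn; apply: le_trans (ler_wpM2l (sqr_ge0 _) (sqr_sum_le _)) _.
  have -> : (lam / n%:R) ^+ 2 * (n%:R * \sum_j (P i j * (u j k - u i k)) ^+ 2) =
      lam ^+ 2 / n%:R * \sum_j (P i j * (u j k - u i k)) ^+ 2.
    by field; exact: lt0r_neq0.
  apply: ler_wpM2l => //; apply: ler_sum => j _.
  have /andP[p0 p1] := P_range i j.
  rewrite exprMn expr2 -mulrA ler_wpM2l //.
  by rewrite -[leRHS]mul1r ler_wpM2r ?sqr_ge0.
have -> : 2 * lam ^+ 2 / n%:R * dissipation u =
    lam ^+ 2 / n%:R * \sum_i \sum_k \sum_j P i j * (u j k - u i k) ^+ 2.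
  have -> : dissipation u = 2^-1 * \sum_i \sum_k \sum_j P i j * (u j k - u i k) ^+ 2.
    congr (_ * _); apply: eq_bigr => i _; rewrite exchange_big /=.
    by apply: eq_bigr => j _; rewrite mulr_sumr.
  by field; exact: lt0r_neq0.
rewrite mulr_sumr; apply: ler_sum => i _; rewrite mulr_sumr.
by apply: ler_sum => k _; exact: drift_le.
Qed.

Lemma sum_mulBB_drift u w :
  \sum_i \sum_j \sum_k (w i k - w j k) * (drift u i k - drift u j k) =
  n%:R *+ 2 * \sum_i \sum_k w i k * drift u i k.
Proof.
under eq_bigr do rewrite exchange_big /=.
rewrite exchange_big /=.
under eq_bigr => k _ do
  rewrite (sum_mulBB_centered (fun i => w i k) (sum_drift_eq0 u k)).
by rewrite -mulr_sumr exchange_big.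
Qed.

Lemma sum_mul_drift u w :
  n%:R * \sum_i \sum_k w i k * drift u i k =
  lam * \sum_i \sum_j \sum_k P i j * (u j k - u i k) * w i k.
Proof.
have n_pos : 0 < n%:R :> R by rewrite ltr0n.
rewrite !mulr_sumr; apply: eq_bigr => i _.
rewrite exchange_big /= !mulr_sumr; apply: eq_bigr => k _.
by rewrite /drift -mulr_suml; field; exact: lt0r_neq0.
Qed.

Lemma alignment_le del u w : 0 < del ->
  \sum_i \sum_j \sum_k P i j * (u j k - u i k) * w i k <=
  (del - 1) * dissipation u + n%:R / (2 * del) * \sum_i \sum_k (w i k - u i k) ^+ 2.
Proof.
move=> del_gt0.
have pointwise i j k : P i j * (u j k - u i k) * w i k <=
    2^-1 * (P i j * (u j k ^+ 2 - u i k ^+ 2))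
    + (del - 1) * (2^-1 * (P i j * (u j k - u i k) ^+ 2))
    + (2 * del)^-1 * (w i k - u i k) ^+ 2.
  rewrite -subr_ge0.
  set a := u j k - u i k; set b := w i k - u i k.
  have -> : 2^-1 * (P i j * (u j k ^+ 2 - u i k ^+ 2)) + (del - 1) * (2^-1 * (P i j * a ^+ 2))
      + (2 * del)^-1 * b ^+ 2 - P i j * a * w i k =
      del / 2 * (P i j * a ^+ 2) + b ^+ 2 / (2 * del) - P i j * a * b.
    by rewrite /a /b; field; exact: lt0r_neq0.
  by rewrite subr_ge0 young_weighted.
apply: le_trans (_ : _ <= \sum_i \sum_j \sum_k _) _.
  by do 3!(apply: ler_sum => ? _); exact: pointwise.
under eq_bigr => i _ do under eq_bigr => j _ do rewrite !big_split /=.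
under eq_bigr => i _ do rewrite !big_split /=.
rewrite !big_split /=.
have -> : \sum_i \sum_j \sum_k 2^-1 * (P i j * (u j k ^+ 2 - u i k ^+ 2)) = 0.
  apply: sum_antisym_eq0 => i j; rewrite -sumrN.
  by apply: eq_bigr => k _; rewrite P_sym; ring.
rewrite add0r; apply: lerD; rewrite le_eqVlt; apply/orP; left; apply/eqP.
- rewrite /dissipation !mulr_sumr; apply: eq_bigr => i _; rewrite !mulr_sumr.
  by apply: eq_bigr => j _; rewrite !mulr_sumr.
- rewrite mulr_sumr; apply: eq_bigr => i _; rewrite exchange_big /= mulr_sumr.
  by apply: eq_bigr => k _; rewrite sumr_const card_ord -mulr_natl; ring.
Qed.

Lemma drift_energy_le del u w : 0 <= lam -> 0 < del ->
  \sum_i \sum_j \sum_k (w i k - w j k) * (drift u i k - drift u j k) <=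
  2 * (del - 1) * lam * dissipation u
  + lam * n%:R / del * \sum_i \sum_k (w i k - u i k) ^+ 2.
Proof.
move=> lam_ge0 del_gt0.
rewrite sum_mulBB_drift mulrnAl sum_mul_drift -mulr_natl.
apply: le_trans (_ : _ <= 2 * (lam * ((del - 1) * dissipation u
  + n%:R / (2 * del) * \sum_i \sum_k (w i k - u i k) ^+ 2))) _.
  by apply: ler_wpM2l => //; apply: ler_wpM2l => //; exact: alignment_le.
by rewrite le_eqVlt; apply/orP; left; apply/eqP; field; exact: lt0r_neq0.
Qed.

End alignment.

Section real_analysis.
Variable R : realType.
Local Notation mu := (@lebesgue_measure R).

Lemma cvg_sum (I : Type) (r : seq I) (f : I -> R -> R) (a : R) :
  (forall i, f i z @[z --> a] --> f i a) ->
  \sum_(i <- r) f i z @[z --> a] --> \sum_(i <- r) f i a.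
Proof. by move=> fa; apply: cvg_big => //; exact: add_continuous. Qed.

Lemma cvg_comp_subr (f : R -> R) (c y : R) :
  f z @[z --> y - c] --> f (y - c) -> f (z - c) @[z --> y] --> f (y - c).
Proof.
have subc : {for y, continuous (fun z : R => z - c)}.
  by apply: cvgB; [exact: cvg_id|exact: cvg_cst].
exact: (continuous_comp subc).
Qed.

Lemma cvg_within_itvcy (f : R -> R) (a y : R) :
  {within `[a, +oo[, continuous f} -> a < y -> f z @[z --> y] --> f y.
Proof.
by move=> /continuous_within_itvcyP[fc _] ay; apply: fc; rewrite in_itv /= ay.
Qed.

Lemma cvg_at_right0_of_diff_quotient (f : R -> R) :
  cvg ((fun h => h^-1 * (f h - f 0)) @ 0^'+) -> f h @[h --> (0 : R)^'+] --> f 0.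
Proof.
move=> dq.
have f_eq : {near 0^'+, (fun h => f 0 + h * (h^-1 * (f h - f 0))) =1 f}.
  near=> h; rewrite mulrA mulfV; first by rewrite mul1r addrC subrK.
  by apply: lt0r_neq0; near: h; exact: nbhs_right_gt.
apply: cvg_trans (near_eq_cvg f_eq) _.
have h_dq : h * (h^-1 * (f h - f 0)) @[h --> 0^'+] --> 0.
  have h0 : h @[h --> 0^'+] --> (0 : R) by apply: cvg_at_right_filter; exact: cvg_id.
  by have := cvgM h0 dq; rewrite mul0r; apply.
by have := cvgD (cvg_cst (f 0)) h_dq; rewrite addr0; apply.
Unshelve. all: by end_near.
Qed.

Lemma continuous_normr_comp (f : R -> R) :
  (forall r, 0 < r -> derivable f r 1) -> f h @[h --> (0 : R)^'+] --> f 0 ->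
  continuous (fun z : R => f `|z|).
Proof.
move=> df f0 z; have [->|z0] := eqVneq z 0; last first.
  apply: (continuous_comp (@norm_continuous _ R z)).
  by apply/differentiable_continuous/derivable1_diffP/df; rewrite normr_gt0.
rewrite /prop_for /continuous_at normr0.
apply/cvgrPdist_lt => e e0.
move/cvgrPdist_lt: f0 => /(_ e e0) /nbhs_ballP [r r0 fr].
apply/nbhs_ballP; exists r => // y ry.
have [->|y0] := eqVneq y 0; first by rewrite normr0 subrr normr0.
apply: fr; last by rewrite normr_gt0.
by move: ry; rewrite /ball /= !sub0r !normrN normr_id.
Qed.

Lemma continuous_segment_integrable (s t : R) (g : R -> R) :
  {in `[s, t], continuous g} -> mu.-integrable `[s, t] (EFin \o g).
Proof.
move=> gc; apply: continuous_compact_integrable; first exact: segment_compact.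
by apply: continuous_in_subspaceT => r /gc.
Qed.

Lemma Rintegral_sum (I : Type) (r : seq I) (s t : R) (f : I -> R -> R) :
  (forall i, {in `[s, t], continuous (f i)}) ->
  \int[mu]_(z in `[s, t]) \sum_(i <- r) f i z = \sum_(i <- r) \int[mu]_(z in `[s, t]) f i z.
Proof.
move=> fc; elim: r => [|a r IH].
  under eq_Rintegral do rewrite big_nil.
  by rewrite big_nil Rintegral_cst // mul0r.
under eq_Rintegral do rewrite big_cons.
rewrite big_cons RintegralD //; first by rewrite IH.
- exact: continuous_segment_integrable.
- apply: continuous_segment_integrable => z zst.
  by apply: cvg_sum => i; exact: fc.
Qed.

Lemma Rintegral_derive1 (F : R -> R) (s t : R) : s < t ->
  {in `[s, t], forall r, derivable F r 1} -> {in `[s, t], continuous F^`()} ->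
  \int[mu]_(r in `[s, t]) derive1 F r = F t - F s.
Proof.
move=> st dF dFc.
have Fc r : r \in `[s, t] -> F z @[z --> r] --> F r.
  by move=> /dF dFr; apply/differentiable_continuous/derivable1_diffP.
have [s_in t_in] : s \in `[s, t] /\ t \in `[s, t].
  by rewrite !inE /= !in_itv /= !lexx ltW.
rewrite /Rintegral (@continuous_FTC2 _ (derive1 F) F s t st) //.
- by apply: continuous_in_subspaceT => r /dFc.
- split.
  + move=> r /[!in_itv] /= /andP[sr rt]; apply: dF.
    by rewrite inE /= in_itv /= !ltW.
  + by apply: cvg_at_right_filter; exact: Fc.
  + by apply: cvg_at_left_filter; exact: Fc.
Qed.

Lemma sqrB_le_integral_sqr_derive1 (F : R -> R) (s t : R) : s < t ->
  {in `[s, t], forall r, derivable F r 1} -> {in `[s, t], continuous F^`()} ->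
  (F t - F s) ^+ 2 <= (t - s) * \int[mu]_(r in `[s, t]) derive1 F r ^+ 2.
Proof.
move=> st dF dFc.
set f := derive1 F in dFc *; set c := (F t - F s) / (t - s).
have ts_gt0 : 0 < t - s by rewrite subr_gt0.
have int_f2 : mu.-integrable `[s, t] (EFin \o (fun r => f r ^+ 2)).
  by apply: continuous_segment_integrable => r /dFc fr; exact: (cvgM fr fr).
have int_f : mu.-integrable `[s, t] (EFin \o (fun r => 2 * c * f r)).
  by apply: continuous_segment_integrable => r /dFc fr; apply: cvgM => //; exact: cvg_cst.
have int_c : mu.-integrable `[s, t] (EFin \o (fun=> c ^+ 2)).
  by apply: continuous_segment_integrable => r _; exact: cvg_cst.
have int_fc : mu.-integrable `[s, t] (EFin \o (fun r => 2 * c * f r - c ^+ 2)).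
  apply: continuous_segment_integrable => r /dFc fr.
  by apply: cvgB; [apply: cvgM => //|]; exact: cvg_cst.
(* Expand [0 <= \int (f - c)^2] for the mean slope [c] of [F]. *)
have : 0 <= \int[mu]_(r in `[s, t]) (f r - c) ^+ 2.
  by apply: Rintegral_ge0 => r _; exact: sqr_ge0.
rewrite (@eq_Rintegral _ _ _ mu _ (fun r => f r ^+ 2 - (2 * c * f r - c ^+ 2))); last first.
  by move=> r _; rewrite sqrrB; ring.
rewrite RintegralB // RintegralB // RintegralZl //; last exact: continuous_segment_integrable dFc.
have mu_st : fine (mu `[s, t]) = t - s.
  by rewrite (lebesgue_measure_itv `[s, t]%R) /= lte_fin st.
rewrite Rintegral_derive1 // Rintegral_cst // mu_st.
have -> : 2 * c * (F t - F s) - c ^+ 2 * (t - s) = (F t - F s) ^+ 2 / (t - s).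
  by rewrite /c; field; exact: lt0r_neq0.
by rewrite subr_ge0 ler_pdivrMr // mulrC.
Qed.
End real_analysis.

Section delayed_flocking.
Variables (R : realType) (N d : nat) (lambda tau : R) (psi : R -> R).
Variables (x v : 'I_N -> 'I_d -> R -> R).
Local Notation mu := (@lebesgue_measure R).

Definition weight (y : R) (i j : 'I_N) : R :=
  psi (eucl_dist (fun l => x i l y) (fun l => x j l y)).

Local Notation force y :=
  (drift lambda (weight (y - tau)) (fun i k => v i k (y - tau))).

Unset Implicit Arguments.
Hypothesis N_gt0 : (0 < N)%N.
Hypothesis tau_gt0 : 0 < tau.
Hypothesis psi_range : forall r, 0 <= r -> 0 < psi r /\ psi r <= 1.
Hypothesis psi_normr_cont : continuous (fun z : R => psi `|z|).
Hypothesis x_cont : forall i k, {within `[- tau, +oo[, continuous (x i k)}.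
Hypothesis v_cont : forall i k, {within `[- tau, +oo[, continuous (v i k)}.
Hypothesis v_eq : forall i k (t : R), 0 < t -> is_derive t 1 (v i k) (force t i k).
Set Implicit Arguments.

Lemma weight_range y i j : 0 <= weight y i j <= 1.
Proof.
have [psi_gt0 psi_le1] := psi_range _ (sqrtr_ge0 (sqdist (fun l => x i l y) (fun l => x j l y))).
by rewrite /weight /eucl_dist (ltW psi_gt0) psi_le1.
Qed.

Lemma Dfun_dissipation y :
  Dfun psi x v y = dissipation (weight y) (fun i k => v i k y).
Proof. by []. Qed.

Lemma weight_sym y i j : weight y i j = weight y j i.
Proof.
rewrite /weight /eucl_dist /sqdist; congr (psi (Num.sqrt _)).
by apply: eq_bigr => k _; rewrite -sqrrN opprB.
Qed.

Lemma weight_cvg y i j : - tau < y -> weight z i j @[z --> y] --> weight y i j.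
Proof.
move=> y_gt.
have sqdist_cvg : sqdist (fun l => x i l z) (fun l => x j l z) @[z --> y] -->
    sqdist (fun l => x i l y) (fun l => x j l y).
  by apply: cvg_sum => k; rewrite expr2; apply: cvgM; apply: cvgB;
    apply: cvg_within_itvcy y_gt.
have normr_dist z : `|eucl_dist (fun l => x i l z) (fun l => x j l z)| =
    eucl_dist (fun l => x i l z) (fun l => x j l z).
  by rewrite ger0_norm // sqrtr_ge0.
have := continuous_comp (continuous_comp sqdist_cvg (@sqrt_continuous R _)) (psi_normr_cont _).
rewrite /prop_for /continuous_at /comp normr_dist.
by under eq_fun do rewrite normr_dist.
Qed.

Lemma Dfun_cvg y : - tau < y -> Dfun psi x v z @[z --> y] --> Dfun psi x v y.
Proof.
move=> y_gt; apply: cvgM; first exact: cvg_cst.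
apply: cvg_sum => i; apply: cvg_sum => j; apply: cvgM; first exact: weight_cvg.
by apply: cvg_sum => k; rewrite expr2; apply: cvgM; apply: cvgB;
  apply: cvg_within_itvcy y_gt.
Qed.

Lemma derive1_v i k (r : R) : 0 < r -> (v i k)^`() r = force r i k.
Proof. by move=> r_gt0; rewrite derive1E (@derive_val _ _ _ _ _ _ _ (v_eq i k r r_gt0)). Qed.

Lemma force_cvg i k (r : R) : 0 < r -> force z i k @[z --> r] --> force r i k.
Proof.
move=> r_gt0; have rtau_gt : - tau < r - tau by rewrite ltrBrDr addNr.
have v_cvg j : v j k (z - tau) @[z --> r] --> v j k (r - tau).
  exact: cvg_comp_subr (cvg_within_itvcy (v_cont j k) rtau_gt).
have w_cvg j : weight (z - tau) i j @[z --> r] --> weight (r - tau) i j.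
  exact: cvg_comp_subr (weight_cvg rtau_gt).
apply: cvgM; first exact: cvg_cst.
by apply: cvg_sum => j; apply: cvgM; [exact: w_cvg | apply: cvgB].
Qed.

Lemma derive1_v_cvg i k (r : R) : 0 < r -> (v i k)^`() z @[z --> r] --> (v i k)^`() r.
Proof.
move=> r_gt0; rewrite derive1_v //; apply: cvg_trans (force_cvg r_gt0).
apply: near_eq_cvg; near=> z; rewrite derive1_v //; near: z; exact: lt_nbhsr.
Unshelve. all: by end_near.
Qed.

Lemma Dtilde_cvg (r : R) : 0 < r ->
  Dtilde psi x v tau z @[z --> r] --> Dtilde psi x v tau r.
Proof.
move=> r_gt0; apply: cvg_comp_subr; apply: Dfun_cvg.
by rewrite ltrBrDr addNr.
Qed.

Lemma sum_sqr_derive1_v_le (r : R) : 0 < r ->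
  \sum_i \sum_k derive1 (v i k) r ^+ 2 <= 2 * lambda ^+ 2 / N%:R * Dtilde psi x v tau r.
Proof.
move=> r_gt0; under eq_bigr do under eq_bigr do rewrite derive1_v //.
rewrite /Dtilde Dfun_dissipation.
exact: (sum_sqr_drift_le lambda N_gt0 (weight_range (r - tau))).
Qed.

Lemma Vfun_is_derive (t : R) : 0 < t ->
  is_derive t 1 (Vfun v)
    (\sum_i \sum_j \sum_k (v i k t - v j k t) * (force t i k - force t j k)).
Proof.
move=> t_gt0.
have sqr_deriv i j k : is_derive t 1 (fun z => (v i k z - v j k z) ^+ 2)
    (2 * (v i k t - v j k t) * (force t i k - force t j k)).
  apply: is_derive_eq (is_deriveX 2 (is_deriveB (v_eq i k t t_gt0) (v_eq j k t t_gt0))) _.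
  by rewrite expr1 mulr_natl.
have Vfun_eq : Vfun v = 2^-1 \*: \sum_i \sum_j \sum_k (fun z => (v i k z - v j k z) ^+ 2).
  apply/funext => y; rewrite /Vfun /= fct_sumE; congr (_ * _).
  apply: eq_bigr => i _; rewrite fct_sumE; apply: eq_bigr => j _.
  by rewrite fct_sumE.
have dV : is_derive t 1 (Vfun v) (2^-1 * \sum_i \sum_j \sum_k
    (2 * (v i k t - v j k t) * (force t i k - force t j k))).
  by rewrite Vfun_eq; exact: is_deriveZ.
apply: is_derive_eq dV _.
rewrite !mulr_sumr; apply: eq_bigr => i _; rewrite mulr_sumr; apply: eq_bigr => j _.
by rewrite mulr_sumr; apply: eq_bigr => k _; field.
Qed.

Lemma delay_increment_le (t : R) : tau < t ->
  \sum_i \sum_k (v i k t - v i k (t - tau)) ^+ 2 <=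
  tau * (2 * lambda ^+ 2 / N%:R * \int[mu]_(r in `[t - tau, t]) Dtilde psi x v tau r).
Proof.
move=> tau_lt_t; set s := t - tau.
have s_gt0 : 0 < s by rewrite subr_gt0.
have pos (r : R) : r \in `[s, t] -> 0 < r.
  by rewrite inE /= in_itv /= => /andP[sr _]; exact: lt_le_trans sr.
have dv_cont i k : {in `[s, t], continuous (v i k)^`()}.
  by move=> r /pos r_gt0; exact: derive1_v_cvg.
have dv2_cont i k : {in `[s, t], continuous (fun r => derive1 (v i k) r ^+ 2)}.
  by move=> r /(dv_cont i k) dr; exact: (cvgM dr dr).
have Dtilde_cont : {in `[s, t], continuous (Dtilde psi x v tau)}.
  by move=> r /pos r_gt0; exact: Dtilde_cvg.
have increment_le i k :
    (v i k t - v i k s) ^+ 2 <= tau * \int[mu]_(r in `[s, t]) derive1 (v i k) r ^+ 2.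
  have -> : tau = t - s by rewrite /s opprB addrC subrK.
  apply: sqrB_le_integral_sqr_derive1 => [|r /pos r_gt0|]; last exact: dv_cont.
  - by rewrite /s ltrBlDr ltrDl.
  - exact: (@ex_derive _ _ _ _ _ _ _ (v_eq i k r r_gt0)).
have int_sqr_derive1_le : \int[mu]_(r in `[s, t]) \sum_i \sum_k derive1 (v i k) r ^+ 2 <=
    \int[mu]_(r in `[s, t]) (2 * lambda ^+ 2 / N%:R * Dtilde psi x v tau r).
  apply: le_Rintegral => //.
  - apply: continuous_segment_integrable => r r_in.
    by apply: cvg_sum => i; apply: cvg_sum => k; exact: dv2_cont.
  - apply: continuous_segment_integrable => r /Dtilde_cont Dr.
    by apply: cvgM => //; exact: cvg_cst.
  - by move=> r r_in; apply: sum_sqr_derive1_v_le; apply: pos; rewrite inE.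
apply: le_trans (_ : _ <= tau * \int[mu]_(r in `[s, t]) \sum_i \sum_k derive1 (v i k) r ^+ 2) _.
  rewrite Rintegral_sum => [|i r r_in]; last by apply: cvg_sum => k; exact: dv2_cont.
  rewrite mulr_sumr; apply: ler_sum => i _; rewrite (Rintegral_sum _ (dv2_cont i)) mulr_sumr.
  by apply: ler_sum => k _; exact: increment_le.
apply: le_trans (ler_wpM2l (ltW tau_gt0) int_sqr_derive1_le) _.
by rewrite RintegralZl //; exact: continuous_segment_integrable Dtilde_cont.
Qed.

End delayed_flocking.

Theorem lemma3p1 (R : realType) (N d : nat) (lambda tau : R) (psi : R -> R)
  (x v : 'I_N -> 'I_d -> R -> R) :
  (1 <= N)%N -> (1 <= d)%N -> 0 < lambda -> 0 < tau ->
  (* psi : [0,oo) -> (0,oo), positive, bounded by 1, nonincreasing, differentiable *)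
  (forall r, 0 <= r -> 0 < psi r /\ psi r <= 1) ->
  (forall r s, 0 <= r -> r <= s -> psi s <= psi r) ->
  (forall r, 0 < r -> derivable psi r 1) ->
  cvg ((fun h : R => h^-1 * (psi h - psi 0)) @ 0^'+) ->
  (* initial data: continuous on [-tau,0], C^1 on (-tau,0) *)
  (forall i k, {within `[- tau, 0], continuous (x i k)}) ->
  (forall i k, {within `[- tau, 0], continuous (v i k)}) ->
  (forall i k (t : R), - tau < t < 0 -> derivable (x i k) t 1 /\ derivable (v i k) t 1) ->
  (forall i k, {within `]- tau, 0[, continuous (x i k)^`()}) ->
  (forall i k, {within `]- tau, 0[, continuous (v i k)^`()}) ->
  (* the solution is continuous on [-tau, oo) *)
  (forall i k, {within `[- tau, +oo[, continuous (x i k)}) ->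
  (forall i k, {within `[- tau, +oo[, continuous (v i k)}) ->
  (* the delayed Cucker-Smale system for t > 0 *)
  (forall i k (t : R), 0 < t -> is_derive t 1 (x i k) (v i k t)) ->
  (forall i k (t : R), 0 < t ->
     is_derive t 1 (v i k)
       (lambda / N%:R * \sum_(j < N)
          psi (eucl_dist (fun l => x i l (t - tau)) (fun l => x j l (t - tau))) *
          (v j k (t - tau) - v i k (t - tau)))) ->
  forall delta : R, 0 < delta ->
  forall t : R, tau < t ->
    derivable (Vfun v) t 1 /\
    (Vfun v)^`() t <=
      2 * (delta - 1) * lambda * Dtilde psi x v tau t
      + 2 * tau * lambda ^+ 3 / delta *
        Rintegral lebesgue_measure `[t - tau, t] (Dtilde psi x v tau).
Proof.
move=> N_gt0 _ lambda_gt0 tau_gt0 psi_range _ psi_der psi_dq _ _ _ _ _ x_cont v_cont _ v_eq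
  delta delta_gt0 t tau_lt_t.
have psi_cont := continuous_normr_comp psi_der (cvg_at_right0_of_diff_quotient psi_dq).
have dV := @Vfun_is_derive _ _ _ _ _ psi x v v_eq t (lt_trans tau_gt0 tau_lt_t).
split; first exact: (@ex_derive _ _ _ _ _ _ _ dV).
rewrite derive1E (@derive_val _ _ _ _ _ _ _ dV).
apply: le_trans (drift_energy_le N_gt0 (weight_range x psi_range (t - tau))
  (weight_sym psi x (t - tau)) _ _ (ltW lambda_gt0) delta_gt0) _.
rewrite /Dtilde Dfun_dissipation lerD2l.
have c_ge0 : 0 <= lambda * N%:R / delta.
  by rewrite divr_ge0 ?mulr_ge0 ?ler0n // ltW.
apply: le_trans (ler_wpM2l c_ge0 (delay_increment_le N_gt0 tau_gt0 psi_range psi_cont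
  x_cont v_cont v_eq tau_lt_t)) _.
rewrite le_eqVlt; apply/orP; left; apply/eqP.
by field; rewrite lt0r_neq0 // pnatr_eq0 -lt0n.
Qed.
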